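(* Let $\Gamma_3^*\subseteq\mathbb{R}^7$ be the set of entropy vectors of triples of discrete random variables. Let $\mathbf{e}_1=[1,0,0,1,1,0,1]^\intercal$, $\mathbf{e}_2=[0,1,0,1,0,1,1]^\intercal$, $\mathbf{e}_3=[0,0,1,0,1,1,1]^\intercal$, $\mathbf{e}_{12}=[1,1,0,1,1,1,1]^\intercal$, $\mathbf{e}_{123'}=[1,1,1,2,2,2,2]^\intercal$, and $\Omega=\mathrm{cone}(\mathbf{e}_1,\mathbf{e}_2,\mathbf{e}_3,\mathbf{e}_{12},\mathbf{e}_{123'})$. Let $\Omega^{\mathrm{in}}$ be the set of all vectors $\lambda_1\mathbf{e}_1+\lambda_2\mathbf{e}_2+\lambda_3\mathbf{e}_3+\lambda_{12}\mathbf{e}_{12}+\lambda_{123'}\mathbf{e}_{123'}$ with all $\lambda_j\ge 0$ such that at least one of the following holds: (i) $\lambda_{12}+\lambda_{123'}\ge\log\lceil 2^{\lambda_{123'}}\rceil$; (ii) $\lambda_{123'}=\log m$ for some $m\in\mathbb{N}$. Then $\Omega^{\mathrm{in}}\subseteq\Omega\cap\Gamma_3^*$.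
   Context: All logarithms are base 2 and entropies are in bits. For a discrete random vector $(X_1,X_2,X_3)$, its entropy vector is $[h_1,h_2,h_3,h_{12},h_{13},h_{23},h_{123}]^\intercal\in\mathbb{R}^7$, where $h_\alpha$ is the Shannon entropy of $(X_i)_{i\in\alpha}$. *)

From HB Require Import structures.
From mathcomp Require Import all_boot all_order all_algebra.
From mathcomp Require Import all_classical all_reals all_analysis.
Set Implicit Arguments. Unset Strict Implicit. Unset Printing Implicit Defensive.
Import Order.TTheory GRing.Theory Num.Theory.
Local Open Scope ring_scope.

Definition log2 {R : realType} (x : R) : R := ln x / ln 2.

Section Entropy.
Variable R : realType.

Definition is_pmf (T : finType) (p : T -> R) : Prop :=
  (forall t, 0 <= p t) /\ \sum_(t : T) p t = 1.

Definition pushpmf (T U : finType) (p : T -> R) (g : T -> U) (u : U) : R :=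
  \sum_(t : T | g t == u) p t.

Definition entropy (U : finType) (q : U -> R) : R :=
  \sum_(u : U) (if q u == 0 then 0 else - (q u * log2 (q u))).

Definition entropy_vector (A1 A2 A3 : finType) (p : (A1 * A2 * A3)%type -> R)
  : 'cV[R]_7 :=
  \col_(i < 7) nth 0
    [:: entropy (pushpmf p (fun t => t.1.1));
        entropy (pushpmf p (fun t => t.1.2));
        entropy (pushpmf p (fun t => t.2));
        entropy (pushpmf p (fun t => (t.1.1, t.1.2)));
        entropy (pushpmf p (fun t => (t.1.1, t.2)));
        entropy (pushpmf p (fun t => (t.1.2, t.2)));
        entropy (pushpmf p (fun t => t))] i.

(* Gamma_3^* : entropy vectors of triples of (finite-alphabet) discrete
   random variables; alphabets WLOG 'I_n1, 'I_n2, 'I_n3. *)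
Definition Gamma3star (v : 'cV[R]_7) : Prop :=
  exists (n1 n2 n3 : nat) (p : ('I_n1 * 'I_n2 * 'I_n3)%type -> R),
    is_pmf p /\ v = entropy_vector p.

Definition vec7 (a b c d e f g : R) : 'cV[R]_7 :=
  \col_(i < 7) nth 0 [:: a; b; c; d; e; f; g] i.

Definition e1 : 'cV[R]_7 := vec7 1 0 0 1 1 0 1.
Definition e2 : 'cV[R]_7 := vec7 0 1 0 1 0 1 1.
Definition e3 : 'cV[R]_7 := vec7 0 0 1 0 1 1 1.
Definition e12 : 'cV[R]_7 := vec7 1 1 0 1 1 1 1.
Definition e123' : 'cV[R]_7 := vec7 1 1 1 2 2 2 2.

Definition comb (l1 l2 l3 l12 l123' : R) : 'cV[R]_7 :=
  l1 *: e1 + l2 *: e2 + l3 *: e3 + l12 *: e12 + l123' *: e123'.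

Definition Omega (v : 'cV[R]_7) : Prop :=
  exists l1 l2 l3 l12 l123' : R,
    [/\ 0 <= l1, 0 <= l2, 0 <= l3, 0 <= l12 & 0 <= l123'] /\
    v = comb l1 l2 l3 l12 l123'.

Definition Omega_in (v : 'cV[R]_7) : Prop :=
  exists l1 l2 l3 l12 l123' : R,
    [/\ 0 <= l1, 0 <= l2, 0 <= l3, 0 <= l12 & 0 <= l123'] /\
    v = comb l1 l2 l3 l12 l123' /\
    (log2 ((Num.ceil (2 `^ l123'))%:~R) <= l12 + l123'
     \/ exists m : nat, (0 < m)%N /\ l123' = log2 (m%:R)).

End Entropy.

(* Entropy vectors of functions of a single random variable add under
   independent products, so the achievable vectors form an additive monoid.
   Every c >= 0 is the entropy of some finite distribution (intermediate
   value theorem on the family (1 - n x, x, ..., x)), and copying one such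
   variable into some of the three coordinates realises c e1, c e2, c e3 and
   c e12.  For e123': if X1 is uniform on a group of order N and X3 is
   independent of it with entropy b <= log N, then (X1, X1 - X3, X3) has
   entropy vector (log N - b) e12 + b e123', since any two of the variables
   determine the third and X1 - X3 is again uniform.  Adding a further
   multiple of e12 yields a e12 + b e123' whenever log N <= a + b, which is
   what condition (i) with N = ceil(2^b) and condition (ii) with N = m
   provide. *)

From HB Require Import structures.
From mathcomp Require Import all_boot all_order all_algebra.
From mathcomp Require Import all_classical all_reals all_analysis.
From mathcomp Require Import ring lra.
Import Order.TTheory GRing.Theory Num.Theory.
Import numFieldNormedType.Exports.
Local Open Scope ring_scope.
Set Implicit Arguments.
Unset Strict Implicit.
Unset Printing Implicit Defensive.

Section EntropyVectors.
Variable R : realType.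

Lemma ln2_gt0 : 0 < ln (2 : R).
Proof. by apply: ln_gt0; lra. Qed.

Lemma log2M (x y : R) : 0 < x -> 0 < y -> log2 (x * y) = log2 x + log2 y.
Proof. by move=> x0 y0; rewrite /log2 lnM ?mulrDl // posrE. Qed.

Lemma le_log2 (b x : R) : 0 < x -> (b <= log2 x) = (2 `^ b <= x).
Proof.
move=> x0; rewrite /log2 ler_pdivlMr ?ln2_gt0 // -ln_powR.
by rewrite ler_ln ?posrE // powR_gt0.
Qed.

Lemma ceil_powR2_nat (b : R) : exists N : nat,
  [/\ (0 < N)%N, (Num.ceil (2 `^ b))%:~R = N%:R :> R & b <= log2 N%:R].
Proof.
have pow_gt0 : 0 < 2 `^ b :> R by rewrite powR_gt0.
have ceil_gt0 : 0 < (Num.ceil (2 `^ b))%:~R :> R.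
  exact: lt_le_trans pow_gt0 (ceil_ge _).
have ceilE : (`|Num.ceil (2 `^ b)|%N)%:R = (Num.ceil (2 `^ b))%:~R :> R.
  by rewrite natr_absz gtr0_norm // -(ltr0z R).
exists `|Num.ceil (2 `^ b)|%N; split; last by rewrite le_log2 ceilE ?ceil_ge.
  by rewrite -(ltr0n R) ceilE.
by rewrite ceilE.
Qed.

(* For an equivalence [r], the entropy of the [r]-class of a [p]-distributed
   point. *)
Definition entropy_rel (T : finType) (p : T -> R) (r : rel T) : R :=
  - \sum_(t : T) p t * log2 (\sum_(s | r s t) p s).

Lemma eq_entropy_rel (T : finType) (p : T -> R) (r r' : rel T) :
  r =2 r' -> entropy_rel p r = entropy_rel p r'.
Proof.
move=> rr'; rewrite /entropy_rel; congr (- _); apply: eq_bigr => t _.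
by congr (_ * log2 _); apply: eq_bigl => s; rewrite rr'.
Qed.

Lemma entropyE (T : finType) (q : T -> R) :
  entropy q = - \sum_(t : T) q t * log2 (q t).
Proof.
rewrite /entropy -sumrN; apply: eq_bigr => t _.
by case: eqP => [->|]; rewrite ?mul0r ?oppr0.
Qed.

Lemma eq_entropy (T : finType) (q q' : T -> R) :
  q =1 q' -> entropy q = entropy q'.
Proof. by move=> qq'; apply: eq_bigr => t _; rewrite qq'. Qed.

Lemma entropy_rel_eq (T : finType) (q : T -> R) :
  entropy_rel q (fun s t => s == t) = entropy q.
Proof.
rewrite entropyE /entropy_rel; congr (- _); apply: eq_bigr => t _.
by rewrite (big_pred1 t).
Qed.

Lemma entropy_rel_true (T : finType) (q : T -> R) :
  is_pmf q -> entropy_rel q (fun _ _ => true) = 0.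
Proof.
case=> _ q1; rewrite /entropy_rel q1 /log2 ln1 mul0r.
by rewrite big1 ?oppr0 // => t _; rewrite mulr0.
Qed.

Lemma entropy_pushpmf (T U : finType) (p : T -> R) (g : T -> U) :
  entropy (pushpmf p g) = entropy_rel p (fun s t => g s == g t).
Proof.
rewrite entropyE /entropy_rel (partition_big g xpredT) //=; congr (- _).
apply: eq_bigr => u _; rewrite {1}/pushpmf big_distrl /=.
by apply: eq_bigr => t /eqP <-.
Qed.

Lemma pushpmf_comp (T U V : finType) (p : T -> R) (f : T -> U) (g : U -> V) :
  pushpmf (pushpmf p f) g =1 pushpmf p (g \o f).
Proof.
move=> w; rewrite /pushpmf (partition_big f (fun u => g u == w)) //=.
apply: eq_bigr => u /eqP guw; apply: eq_bigl => t.
by case: (eqVneq (f t) u) => [->|]; rewrite ?guw ?andbF ?eqxx.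
Qed.

Lemma is_pmf_pushpmf (T U : finType) (p : T -> R) (f : T -> U) :
  is_pmf p -> is_pmf (pushpmf p f).
Proof.
case=> p_ge0 p_sum1; split=> [u|]; first exact: sumr_ge0.
by rewrite /pushpmf -p_sum1 (partition_big f xpredT).
Qed.

Lemma is_pmf_prod (T1 T2 : finType) (p1 : T1 -> R) (p2 : T2 -> R) :
  is_pmf p1 -> is_pmf p2 -> is_pmf (fun t : T1 * T2 => p1 t.1 * p2 t.2).
Proof.
case=> p1_ge0 p1_sum1 [p2_ge0 p2_sum1].
split=> [t|]; first exact: mulr_ge0.
rewrite -(pair_bigA _ (fun i j => p1 i * p2 j)) /=.
by under eq_bigr => i _ do rewrite -big_distrr /= p2_sum1 mulr1.
Qed.

Lemma class_mass_gt0 (T : finType) (p : T -> R) (r : rel T) t :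
  (forall s, 0 <= p s) -> r t t -> p t != 0 -> 0 < \sum_(s | r s t) p s.
Proof.
move=> p_ge0 rtt pt0; rewrite (bigD1 t) //=.
by rewrite ltr_wpDr ?sumr_ge0 // lt_def pt0 p_ge0.
Qed.

Lemma entropy_rel_prod (T1 T2 : finType) (p1 : T1 -> R) (p2 : T2 -> R)
    (r1 : rel T1) (r2 : rel T2) :
  is_pmf p1 -> is_pmf p2 -> reflexive r1 -> reflexive r2 ->
  entropy_rel (fun t : T1 * T2 => p1 t.1 * p2 t.2)
    (fun s t => r1 s.1 t.1 && r2 s.2 t.2)
  = entropy_rel p1 r1 + entropy_rel p2 r2.
Proof.
case=> p1_ge0 p1_sum1 [p2_ge0 p2_sum1] r1_refl r2_refl.
rewrite /entropy_rel -opprD; congr (- _).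
set A := fun x => \sum_(s | r1 s x) p1 s.
set B := fun y => \sum_(s | r2 s y) p2 s.
have classM (t : T1 * T2) :
    \sum_(s | r1 s.1 t.1 && r2 s.2 t.2) p1 s.1 * p2 s.2 = A t.1 * B t.2.
  by rewrite big_distrlr (pair_big_dep (r1^~ t.1) (fun _ => r2^~ t.2)
    (fun i j => p1 i * p2 j)).
have termM (t : T1 * T2) : p1 t.1 * p2 t.2 * log2 (A t.1 * B t.2) =
    p1 t.1 * log2 (A t.1) * p2 t.2 + p2 t.2 * log2 (B t.2) * p1 t.1.
  case: t => x y /=.
  have [->|px0] := eqVneq (p1 x) 0; first by rewrite !(mul0r, mulr0, addr0).
  have [->|py0] := eqVneq (p2 y) 0; first by rewrite !(mul0r, mulr0, add0r).
  by rewrite log2M ?class_mass_gt0 //; ring.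
under eq_bigr => t _ do rewrite classM termM.
rewrite big_split /= -(pair_bigA _ (fun i j => p1 i * log2 (A i) * p2 j)).
rewrite -(pair_bigA _ (fun i j => p2 j * log2 (B j) * p1 i)) /=.
rewrite [X in _ + X = _]exchange_big /=.
by congr (_ + _); apply: eq_bigr => z _;
  rewrite -big_distrr /= ?p1_sum1 ?p2_sum1 mulr1.
Qed.

Lemma entropy_rel_reindex (T : finType) (p : T -> R) (r : rel T)
    (phi : T -> T) :
  injective phi ->
  entropy_rel (p \o phi) (fun s t => r (phi s) (phi t)) = entropy_rel p r.
Proof.
move=> phi_inj; rewrite /entropy_rel; congr (- _).
rewrite [RHS](reindex_inj phi_inj); apply: eq_bigr => t _ /=.
by rewrite [in RHS](reindex_inj phi_inj).
Qed.

Lemma vec7D (a b c d e f g a' b' c' d' e' f' g' : R) :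
  vec7 a b c d e f g + vec7 a' b' c' d' e' f' g' =
  vec7 (a + a') (b + b') (c + c') (d + d') (e + e') (f + f') (g + g').
Proof.
by apply/matrixP => i j; rewrite !mxE; case: i => [[|[|[|[|[|[|[|]]]]]]] ?].
Qed.

Lemma vec7Z (k a b c d e f g : R) :
  k *: vec7 a b c d e f g =
  vec7 (k * a) (k * b) (k * c) (k * d) (k * e) (k * f) (k * g).
Proof.
by apply/matrixP => i j; rewrite !mxE; case: i => [[|[|[|[|[|[|[|]]]]]]] ?].
Qed.

Definition entropy_vector_fun (T : finType) (p : T -> R) (B1 B2 B3 : finType)
    (f1 : T -> B1) (f2 : T -> B2) (f3 : T -> B3) : 'cV[R]_7 :=
  vec7 (entropy_rel p (fun s t => f1 s == f1 t))
       (entropy_rel p (fun s t => f2 s == f2 t))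
       (entropy_rel p (fun s t => f3 s == f3 t))
       (entropy_rel p (fun s t => (f1 s == f1 t) && (f2 s == f2 t)))
       (entropy_rel p (fun s t => (f1 s == f1 t) && (f3 s == f3 t)))
       (entropy_rel p (fun s t => (f2 s == f2 t) && (f3 s == f3 t)))
       (entropy_rel p (fun s t =>
          [&& f1 s == f1 t, f2 s == f2 t & f3 s == f3 t])).

Definition achievable (v : 'cV[R]_7) : Prop :=
  exists (T : finType) (p : T -> R) (B1 B2 B3 : finType)
    (f1 : T -> B1) (f2 : T -> B2) (f3 : T -> B3),
    is_pmf p /\ v = entropy_vector_fun p f1 f2 f3.

Lemma achievable_Gamma3star (v : 'cV[R]_7) : achievable v -> Gamma3star v.
Proof.
case=> T [p [B1 [B2 [B3 [f1 [f2 [f3 [p_pmf ->]]]]]]]].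
pose F t := (enum_rank (f1 t), enum_rank (f2 t), enum_rank (f3 t)).
exists #|B1|, #|B2|, #|B3|, (pushpmf p F); split; first exact: is_pmf_pushpmf.
apply/matrixP => i j; rewrite !mxE; congr (nth 0 _ i).
by congr [:: _; _; _; _; _; _; _];
  rewrite (eq_entropy (pushpmf_comp _ _ _)) entropy_pushpmf;
  apply: eq_entropy_rel => s t /=;
  rewrite ?xpair_eqE !(inj_eq enum_rank_inj) ?andbA.
Qed.

Lemma achievableD (v w : 'cV[R]_7) :
  achievable v -> achievable w -> achievable (v + w).
Proof.
case=> T [p [B1 [B2 [B3 [f1 [f2 [f3 [p_pmf ->]]]]]]]].
case=> T' [p' [B1' [B2' [B3' [f1' [f2' [f3' [p'_pmf ->]]]]]]]].
exists (T * T')%type, (fun t => p t.1 * p' t.2), (B1 * B1')%type,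
  (B2 * B2')%type, (B3 * B3')%type, (fun t => (f1 t.1, f1' t.2)),
  (fun t => (f2 t.1, f2' t.2)), (fun t => (f3 t.1, f3' t.2)).
split; first exact: is_pmf_prod.
rewrite /entropy_vector_fun vec7D; congr vec7;
  rewrite -entropy_rel_prod //; try (by move=> ?; rewrite !eqxx);
  by apply: eq_entropy_rel => s t; rewrite !xpair_eqE; do ![case: (_ == _)].
Qed.

Definition xlnx (y : R) : R := y * ln y.

Lemma continuous_xlnx (y : R) : 0 < y -> {for y, continuous xlnx}.
Proof.
by move=> y0; apply: continuousM; [exact: cvg_id | exact: continuous_ln].
Qed.

Lemma xlnx_ge (y : R) : 0 < y -> y - 1 <= xlnx y.
Proof.
move=> y0; have yV0 : 0 < y^-1 by rewrite invr_gt0.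
have : ln y^-1 <= y^-1 - 1.
  by have := @le_ln1Dx R (y^-1 - 1); rewrite subrKC; apply; lra.
rewrite lnV ?posrE // => /(ler_wpM2l (ltW y0)).
by rewrite mulrBr mulfV ?gt_eqF // /xlnx; lra.
Qed.

Lemma xlnx_inv_sqr_ge (k : R) : 1 <= k -> - (2 / k) <= xlnx (k * k)^-1.
Proof.
move=> k1; have k0 : 0 < k by lra.
have kk0 : 0 < k * k by exact: mulr_gt0.
rewrite /xlnx lnV ?posrE // lnM ?posrE // mulrN lerN2.
have -> : 2 / k = (k * k)^-1 * (2 * k) by field; rewrite gt_eqF.
by rewrite ler_wpM2l ?invr_ge0 ?(ltW kk0) //; have := ln_sublinear k0; lra.
Qed.

(* As x runs over [0, 1/(n+1)], the entropy of this distribution runs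
   continuously from 0 to log (n+1). *)
Definition tilted_pmf (n : nat) (x : R) : 'I_n.+1 -> R :=
  fun i => if i == ord0 then 1 - n%:R * x else x.
Arguments tilted_pmf : clear implicits.

Definition tilted_entropy (n : nat) (x : R) : R :=
  - (xlnx (1 - n%:R * x) + n%:R * xlnx x).

Lemma tilted_head_gt0 (n : nat) (x : R) :
  x <= n.+1%:R^-1 -> 0 < 1 - n%:R * x.
Proof.
move=> xN; rewrite subr_gt0.
have nN : n%:R * n.+1%:R^-1 < 1 :> R.
  by rewrite ltr_pdivrMr ?ltr0n // mul1r ltr_nat.
by apply: le_lt_trans nN; rewrite ler_wpM2l.
Qed.

Lemma is_pmf_tilted (n : nat) (x : R) :
  0 <= x -> x <= n.+1%:R^-1 -> is_pmf (tilted_pmf n x).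
Proof.
move=> x0 xN; split=> [i|].
  by rewrite /tilted_pmf; case: ifP => // _; exact: ltW (tilted_head_gt0 xN).
rewrite big_ord_recl /tilted_pmf eqxx.
by rewrite (eq_bigr (fun=> x)) // sumr_const card_ord -mulr_natr; ring.
Qed.

Lemma entropy_tilted (n : nat) (x : R) :
  entropy (tilted_pmf n x) = tilted_entropy n x / ln 2.
Proof.
rewrite entropyE big_ord_recl /tilted_pmf eqxx.
rewrite (eq_bigr (fun=> x * log2 x)) // sumr_const card_ord.
by rewrite /tilted_entropy /xlnx /log2 -mulr_natr; ring.
Qed.

Lemma tilted_entropy0 (n : nat) : tilted_entropy n 0 = 0.
Proof. by rewrite /tilted_entropy /xlnx mulr0 subr0 ln1; ring. Qed.

Lemma tilted_entropy_uniform (n : nat) :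
  tilted_entropy n n.+1%:R^-1 = ln n.+1%:R.
Proof.
have N0 : n.+1%:R != 0 :> R by rewrite pnatr_eq0.
have Nn : n.+1%:R = n%:R + 1 :> R by rewrite natr1.
have headE : 1 - n%:R * n.+1%:R^-1 = n.+1%:R^-1 :> R.
  by apply: (mulfI N0); rewrite mulrBr mulfV // mulrCA mulfV // Nn; ring.
rewrite /tilted_entropy headE /xlnx lnV ?posrE ?ltr0n //.
have -> (w L : R) : - (w * - L + n%:R * (w * - L)) = w * (n%:R + 1) * L by ring.
by rewrite -Nn mulVf // mul1r.
Qed.

Lemma continuous_tilted_entropy (n : nat) (x : R) :
  0 < x -> 0 < 1 - n%:R * x -> {for x, continuous (tilted_entropy n)}.
Proof.
move=> x0 head0; apply: continuousN; apply: continuousD.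
  have head_cont : {for x, continuous (fun z : R => 1 - n%:R * z)}.
    apply: continuousB; first exact: cvg_cst.
    by apply: continuousM; [exact: cvg_cst | exact: cvg_id].
  exact: continuous_comp head_cont (continuous_xlnx head0).
by apply: continuousM; [exact: cvg_cst | exact: continuous_xlnx].
Qed.

(* This avoids the continuity of x ln x at 0: the intermediate value theorem
   is applied on [1/k^2, 1/(n+1)] for a large k. *)
Lemma tilted_entropy_small (n : nat) (eps : R) : 0 < eps ->
  exists x : R, [/\ 0 < x, x <= n.+1%:R^-1 & tilted_entropy n x <= eps].
Proof.
move=> eps0.
pose k : R := (Num.bound (3 * n%:R / eps) + n.+1)%N%:R.
have Nk : n.+1%:R <= k by rewrite ler_nat leq_addl.
have epsk : 3 * n%:R < k * eps.
  rewrite -(ltr_pdivrMr _ _ eps0); apply: lt_le_trans (archi_boundP _) _.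
    by rewrite divr_ge0 ?mulr_ge0 ?ler0n // ltW.
  by rewrite ler_nat leq_addr.
have k1 : 1 <= k by apply: le_trans Nk; rewrite ler1n.
have k0 : 0 < k by lra.
have kk0 : 0 < k * k by exact: mulr_gt0.
have xk : (k * k)^-1 <= k^-1 by rewrite lef_pV2 ?posrE //; nra.
have xN : (k * k)^-1 <= n.+1%:R^-1.
  by apply: le_trans xk _; rewrite lef_pV2 ?posrE ?ltr0n.
exists (k * k)^-1; split; rewrite ?invr_gt0 //.
have head_ge := xlnx_ge (tilted_head_gt0 xN).
have tail_ge : n%:R * - (2 / k) <= n%:R * xlnx (k * k)^-1.
  by rewrite ler_wpM2l ?xlnx_inv_sqr_ge.
have nx : n%:R * (k * k)^-1 <= n%:R / k by rewrite ler_wpM2l.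
have nk : 3 * (n%:R / k) < eps by rewrite mulrA ltr_pdivrMr // (mulrC eps).
rewrite /tilted_entropy; lra.
Qed.

Lemma exists_pmf_entropy (n : nat) (b : R) :
  0 <= b -> b <= log2 n.+1%:R ->
  exists2 q : 'I_n.+1 -> R, is_pmf q & entropy q = b.
Proof.
move=> b0 bN.
suff [x [x0 xN hx]] : exists x : R,
    [/\ 0 <= x, x <= n.+1%:R^-1 & tilted_entropy n x = b * ln 2].
  exists (tilted_pmf n x); first exact: is_pmf_tilted.
  by rewrite entropy_tilted hx mulfK // gt_eqF ?ln2_gt0.
have [<-|b_neq0] := eqVneq 0 b.
  by exists 0; rewrite tilted_entropy0 mul0r invr_ge0 ler0n.
have bln2_gt0 : 0 < b * ln 2.
  by rewrite mulr_gt0 ?ln2_gt0 // lt_def eq_sym b_neq0.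
have [x0 [x0_gt0 x0N small]] := tilted_entropy_small n bln2_gt0.
have bln2_le : b * ln 2 <= ln n.+1%:R by rewrite -ler_pdivlMr ?ln2_gt0.
have [x] : exists2 x, x \in `[x0, n.+1%:R^-1] & tilted_entropy n x = b * ln 2.
  apply: IVT => //; last first.
    by rewrite tilted_entropy_uniform ge_min le_max small bln2_le orbT.
  apply: continuous_in_subspaceT => x.
  rewrite inE /= in_itv /= => /andP[x0x xN].
  apply: continuous_tilted_entropy; first exact: lt_le_trans x0x.
  exact: tilted_head_gt0.
rewrite in_itv /= => /andP[x0x xN] hx; exists x; split => //.
exact: le_trans (ltW x0_gt0) x0x.
Qed.

Lemma exists_pmf_entropy_ge0 (c : R) : 0 <= c ->
  exists n (q : 'I_n.+1 -> R), is_pmf q /\ entropy q = c.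
Proof.
move=> c0; have [[|n] [// _ _ cN]] := ceil_powR2_nat c.
by have [q] := exists_pmf_entropy c0 cN; exists n, q.
Qed.

(* Per unit of H(X), the entropy vector of (X1, X2, X3) where Xi is a copy of
   X if bi holds and a constant otherwise; e1, e2, e3 and e12 are of this
   form. *)
Definition copies_vector (b1 b2 b3 : bool) : 'cV[R]_7 :=
  vec7 b1%:R b2%:R b3%:R (b1 || b2)%:R (b1 || b3)%:R (b2 || b3)%:R
    [|| b1, b2 | b3]%:R.

Lemma achievable_copies (c : R) (b1 b2 b3 : bool) :
  0 <= c -> achievable (c *: copies_vector b1 b2 b3).
Proof.
move=> c0; have [n [q [q_pmf qc]]] := exists_pmf_entropy_ge0 c0.
pose f (b : bool) (t : 'I_n.+1) := if b then t else ord0.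
have fE b s t : (f b s == f b t) = b ==> (s == t).
  by case: b => /=; rewrite ?eqxx.
have entropy_copy (b : bool) :
    entropy_rel q (fun s t => b ==> (s == t)) = c * b%:R.
  case: b; first by rewrite mulr1 -qc -entropy_rel_eq.
  by rewrite mulr0 -(entropy_rel_true q_pmf).
exists 'I_n.+1, q, 'I_n.+1, 'I_n.+1, 'I_n.+1, (f b1), (f b2), (f b3).
split=> //; rewrite /entropy_vector_fun /copies_vector vec7Z.
congr vec7; rewrite -entropy_copy;
  apply: eq_entropy_rel => s t; rewrite !fE;
  by case: b1 b2 b3 => [] [] [] /=; rewrite ?andbT ?andbb.
Qed.

Lemma is_pmf_uniform (G : finType) :
  (0 < #|G|)%N -> is_pmf (fun _ : G => #|G|%:R^-1 : R).
Proof.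
move=> G0; split=> [_|]; first by rewrite invr_ge0 ler0n.
by rewrite sumr_const -[LHS]mulr_natr mulVf // pnatr_eq0 -lt0n.
Qed.

Lemma entropy_uniform (G : finType) : (0 < #|G|)%N ->
  entropy (fun _ : G => #|G|%:R^-1 : R) = log2 #|G|%:R.
Proof.
move=> G0; have N0 : #|G|%:R != 0 :> R by rewrite pnatr_eq0 -lt0n.
rewrite entropyE sumr_const -[_ * _ *+ _]mulr_natr.
rewrite /log2 lnV ?posrE ?ltr0n //.
by field; rewrite N0 gt_eqF ?ln2_gt0.
Qed.

Lemma achievable_triangle (G : finZmodType) (q : G -> R) : is_pmf q ->
  achievable ((log2 #|G|%:R - entropy q) *: e12 R + entropy q *: e123' R).
Proof.
move=> q_pmf; set L := log2 #|G|%:R; set b := entropy q.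
have G0 : (0 < #|G|)%N by apply/card_gt0P; exists 0.
pose u (_ : G) := #|G|%:R^-1 : R.
pose p (t : G * G) := u t.1 * q t.2.
have u_pmf : is_pmf u := is_pmf_uniform G0.
have entropy_p (r : rel (G * G)) (r1 r2 : rel G) :
    reflexive r1 -> reflexive r2 ->
    r =2 (fun s t => r1 s.1 t.1 && r2 s.2 t.2) ->
    entropy_rel p r = entropy_rel u r1 + entropy_rel q r2.
  move=> r1_refl r2_refl rE.
  by rewrite -entropy_rel_prod // -(eq_entropy_rel _ rE).
have entropy_u : entropy_rel u (fun s t => s == t) = L.
  by rewrite entropy_rel_eq entropy_uniform.
have entropy_q : entropy_rel q (fun s t => s == t) = b.
  by rewrite entropy_rel_eq.
have entropy_fst : entropy_rel p (fun s t => s.1 == t.1) = L.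
  rewrite (entropy_p _ (fun s t => s == t) (fun _ _ => true)) //; last first.
    by move=> s t; rewrite andbT.
  by rewrite entropy_u entropy_rel_true // addr0.
have entropy_pair (r : rel (G * G)) :
    r =2 (fun s t => s == t) -> entropy_rel p r = L + b.
  move=> rE; rewrite (entropy_p _ (fun s t => s == t) (fun s t => s == t)) //.
  by rewrite entropy_u entropy_q.
pose phi (t : G * G) := (t.1 - t.2, t.2).
have phi_inj : injective phi.
  apply: (can_inj (g := fun t => (t.1 + t.2, t.2))).
  by case=> x y; rewrite /= subrK.
suff -> : (L - b) *: e12 R + b *: e123' R =
    vec7 L L b (L + b) (L + b) (L + b) (L + b).
  exists (G * G)%type, p, G, G, G, fst, (fun t => t.1 - t.2), snd.
  split; first exact: is_pmf_prod.
  rewrite /entropy_vector_fun; congr vec7.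
  - by rewrite entropy_fst.
  - by rewrite -[in LHS]entropy_fst -(entropy_rel_reindex _ _ phi_inj).
  - rewrite (entropy_p _ (fun _ _ => true) (fun s t => s == t)) //.
    by rewrite entropy_rel_true // add0r.
  - apply/esym/entropy_pair => -[x y] [x' y'] /=; rewrite xpair_eqE.
    by case: (eqVneq x x') => [<-|] //=; rewrite (inj_eq (addrI x)) eqr_opp.
  - by apply/esym/entropy_pair.
  - apply/esym/entropy_pair => -[x y] [x' y'] /=; rewrite xpair_eqE.
    case: (eqVneq y y') => [<-|]; rewrite ?andbF //.
    by rewrite (inj_eq (addIr _)) andbT.
  - apply/esym/entropy_pair => -[x y] [x' y'] /=; rewrite xpair_eqE.
    case: (eqVneq x x') => [<-|] //=.
    by rewrite (inj_eq (addrI x)) eqr_opp andbb.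
by rewrite /e12 /e123' !vec7Z vec7D; congr vec7; ring.
Qed.

Lemma achievable_e12_e123' (N : nat) (a b : R) :
  (0 < N)%N -> 0 <= b -> b <= log2 N%:R -> log2 N%:R <= a + b ->
  achievable (a *: e12 R + b *: e123' R).
Proof.
case: N => // n _ b0 bN abN.
have [q q_pmf qb] := exists_pmf_entropy b0 bN.
have surplus_ge0 : 0 <= a + b - log2 n.+1%:R by lra.
have surplus : achievable ((a + b - log2 n.+1%:R) *: e12 R).
  exact: achievable_copies true true false surplus_ge0.
have := achievableD surplus (achievable_triangle q_pmf).
rewrite card_ord qb addrA -scalerDl.
by have -> : a + b - log2 n.+1%:R + (log2 n.+1%:R - b) = a by ring.
Qed.

End EntropyVectors.

Theorem corollary2 (R : realType) (v : 'cV[R]_7) :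
  Omega_in v -> Omega v /\ Gamma3star v.
Proof.
case=> l1 [l2 [l3 [l12 [l123 [[l1_ge0 l2_ge0 l3_ge0 l12_ge0 l123_ge0]
  [-> hcase]]]]]].
split; first by exists l1, l2, l3, l12, l123.
apply: achievable_Gamma3star.
have tail : achievable (l12 *: e12 R + l123 *: e123' R).
  case: hcase => [|[m [m_gt0 l123E]]].
    have [N [N_gt0 -> l123N]] := ceil_powR2_nat l123.
    exact: achievable_e12_e123' N_gt0 l123_ge0 l123N.
  by apply: (achievable_e12_e123' m_gt0); lra.
rewrite /comb -addrA; apply: achievableD tail.
apply: achievableD; first apply: achievableD.
- exact: achievable_copies true false false l1_ge0.
- exact: achievable_copies false true false l2_ge0.
- exact: achievable_copies false false true l3_ge0.
Qed.
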